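(* Let $\mathcal T\ge2$, $\mathcal S\ge\max\{2\mathcal T,6\}$, and $(t,x)\in\mathbb R\times\mathbb R^3$ with $|t-|x||\le1$ and $|x|\ge\max\{12,\mathcal T,2\mathcal S\}$. Then $$\int_{|x-y|\le t+\mathcal T}\frac{dy}{|x-y||y|^4}\mathbf 1_{\{|y|\ge\frac12(1+|t-|x-y||)\}}\le C(1+\mathcal T)\frac{1}{|x|},$$ with $C$ an absolute constant. *)

From HB Require Import structures.
From mathcomp Require Import all_boot all_order all_algebra.
From mathcomp Require Import all_classical all_reals all_analysis.
Set Implicit Arguments. Unset Strict Implicit. Unset Printing Implicit Defensive.
Import Order.TTheory GRing.Theory Num.Theory.
Local Open Scope ring_scope.

Definition R3 (R : realType) : Type := ((R * R) * R)%type.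

Definition leb3 (R : realType) :=
  ((@lebesgue_measure R \x @lebesgue_measure R) \x @lebesgue_measure R)%E.

Definition norm3 (R : realType) (y : R * R * R) : R :=
  Num.sqrt (y.1.1 ^+ 2 + y.1.2 ^+ 2 + y.2 ^+ 2).

Definition sub3 (R : realType) (x y : R * R * R) : R * R * R :=
  ((x.1.1 - y.1.1, x.1.2 - y.1.2), x.2 - y.2).
Arguments leb3 R : clear implicits.

(* Write X = |x|, w = |x - y| and u = |y|.  Since X^2 <= 2 w^2 + 2 u^2, either
   w >= X/2 or u >= X/2, so the integrand is at most (2/X) u^-4 + (16/X^4) w^-1;
   on the domain of integration w <= t + T <= 3X, and the indicator forces
   u >= 1/2.  Instead of integrating in polar coordinates, we dominate u^-4 on
   {u >= 1/2} and w^-1 on {w <= 3X} by geometric series of indicators of dyadic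
   cubes, whose integrals are at most 512 and 192 X^2.  Hence the integral is at
   most 1024/X + 3072/X^2 <= 4096/X. *)

From HB Require Import structures.
From mathcomp Require Import all_boot all_order all_algebra.
From mathcomp Require Import all_classical all_reals all_analysis.
From mathcomp Require Import measurable_realfun ring lra.
Import Order.TTheory GRing.Theory Num.Theory.
Local Open Scope ring_scope.
Local Open Scope classical_set_scope.

Section indicator_series.
Context {d : measure_display} {T : measurableType d} {R : realType}.
Variable mu : {measure set T -> \bar R}.
Local Open Scope ereal_scope.

(* Unlike [ge0_le_integral], no measurability is needed: the integral of a
   nonnegative function is the supremum of the integrals of its simple minorants. *)
Lemma ge0_le_integralT (f g : T -> \bar R) :
  (forall x, 0 <= f x) -> (forall x, f x <= g x) ->
  \int[mu]_x f x <= \int[mu]_x g x.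
Proof.
move=> f0 fg; have g0 x : 0 <= g x := le_trans (f0 x) (fg x).
rewrite !ge0_integralTE //; apply: le_ereal_sup => _ [h /= hf <-].
by exists h => //= x; exact: le_trans (hf x) (fg x).
Qed.

Variables (c : nat -> R) (A : nat -> set T).
Hypotheses (c_ge0 : forall n, (0 <= c n)%R) (mA : forall n, measurable (A n)).

Definition indic_series x := \sum_(n <oo) (c n * \1_(A n) x)%:E.

Let term_ge0 n x : 0 <= (c n * \1_(A n) x)%:E.
Proof. by rewrite lee_fin mulr_ge0 // indicE ler0n. Qed.

Let measurable_term n :
  measurable_fun setT (fun x => ((c n * \1_(A n) x)%:E : \bar R)).
Proof.
by apply/measurable_EFinP; apply: measurable_funM => //; exact: measurable_indic.
Qed.

Lemma indic_series_ge0 x : 0 <= indic_series x.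
Proof. by apply: nneseries_ge0 => n _ _; exact: term_ge0. Qed.

Lemma measurable_indic_series : measurable_fun setT indic_series.
Proof.
apply: (@ge0_emeasurable_sum _ _ _ _ (fun n x => (c n * \1_(A n) x)%:E) xpredT).
  by move=> n x _ _; exact: term_ge0.
by move=> n _; exact: measurable_term.
Qed.

Lemma integral_indic_series :
  \int[mu]_x indic_series x = \sum_(n <oo) ((c n)%:E * mu (A n)).
Proof.
rewrite integral_nneseries //; apply: eq_eseriesr => n _.
rewrite (integralZl_indic measurableT (fun=> A n)) //; last first.
  by move=> /lt_le_trans /(_ (c_ge0 n)); rewrite ltxx.
by rewrite integral_indic // setIT.
Qed.

Lemma le_indic_series n x : A n x -> (c n)%:E <= indic_series x.
Proof.
move=> Anx; rewrite /indic_series (@nneseriesD1 _ _ n xpredT) //.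
by rewrite indicE mem_set // mulr1 leeDl // nneseries_ge0 // => k _ _; exact: term_ge0.
Qed.

End indicator_series.

Lemma nneseries_geometric_le (R : realType) (a q : R) : 0 <= a -> 0 < q < 1 ->
  (\sum_(n <oo) (a * q ^+ n)%:E <= (a / (1 - q))%:E)%E.
Proof.
move=> a0 /andP[q0 q1]; apply: lime_le.
  by apply: is_cvg_nneseries => n _ _; rewrite lee_fin mulr_ge0 // exprn_ge0 // ltW.
apply: nearW => N; rewrite sumEFin lee_fin.
by apply: geometric_le_lim => //; rewrite ger0_norm // ltW.
Qed.

Lemma exists_expr2_gt {R : archiRealFieldType} (r : R) : exists n, r < 2 ^+ n.
Proof.
have := archi_boundP (normr_ge0 r); set n := Num.bound _ => rn.
have : (n%:R : R) < 2 ^+ n by rewrite -natrX ltr_nat ltn_expl.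
by exists n; have := ler_norm r; lra.
Qed.

Lemma inv_mul_le_far_near (R : realFieldType) (X w u : R) :
  0 < X -> 0 < w -> 0 < u -> X ^+ 2 <= 2 * w ^+ 2 + 2 * u ^+ 2 ->
  (w * u ^+ 4)^-1 <= 2 / X * (u ^+ 4)^-1 + 16 / X ^+ 4 * w^-1.
Proof.
move=> X_gt0 w_gt0 u_gt0 hX; rewrite invfM.
have inv_le (a b : R) : 0 < a -> a <= b -> b^-1 <= a^-1.
  by move=> a_gt0 ab; rewrite lef_pV2 ?posrE // (lt_le_trans a_gt0 ab).
have u4_ge0 : 0 <= (u ^+ 4)^-1 by rewrite invr_ge0 exprn_ge0 // ltW.
have w1_ge0 : 0 <= w^-1 by rewrite invr_ge0 ltW.
have far_ge0 : 0 <= 2 / X * (u ^+ 4)^-1 by rewrite mulr_ge0 // divr_ge0 // ltW.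
have near_ge0 : 0 <= 16 / X ^+ 4 * w^-1.
  by rewrite mulr_ge0 // divr_ge0 // exprn_ge0 // ltW.
have [Xw|wX] := leP X (2 * w).
- suff : w^-1 * (u ^+ 4)^-1 <= 2 / X * (u ^+ 4)^-1 by lra.
  rewrite ler_wpM2r // -invf_div; apply: inv_le; [exact: divr_gt0 | lra].
- have Xu : X <= 2 * u by nra.
  suff : w^-1 * (u ^+ 4)^-1 <= 16 / X ^+ 4 * w^-1 by lra.
  rewrite mulrC ler_wpM2r // -invf_div; apply: inv_le.
    by rewrite divr_gt0 ?exprn_gt0.
  have -> : 16 = 2 ^+ 4 :> R by rewrite -natrX.
  by rewrite ler_pdivrMr // -exprMn lerXn2r ?nnegrE; lra.
Qed.

Section dyadic_cubes.
Context {R : realType}.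
Local Notation mR3 := (measurableTypeR R * measurableTypeR R * measurableTypeR R)%type.
Implicit Types (c x y : R * R * R) (r : R).

Lemma norm3_ge0 y : 0 <= norm3 y.
Proof. exact: sqrtr_ge0. Qed.

Lemma sqr_norm3 y : norm3 y ^+ 2 = y.1.1 ^+ 2 + y.1.2 ^+ 2 + y.2 ^+ 2.
Proof. by rewrite sqr_sqrtr // !addr_ge0 // sqr_ge0. Qed.

Lemma norm3_sub0 y : norm3 (sub3 ((0, 0), 0) y) = norm3 y.
Proof. by rewrite /norm3 /sub3 /= !sub0r !sqrrN. Qed.

Lemma sqr_norm3_le x y :
  norm3 x ^+ 2 <= 2 * norm3 (sub3 x y) ^+ 2 + 2 * norm3 y ^+ 2.
Proof.
rewrite !sqr_norm3 /sub3 /=.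
have := sqr_ge0 (x.1.1 - 2 * y.1.1); have := sqr_ge0 (x.1.2 - 2 * y.1.2).
have := sqr_ge0 (x.2 - 2 * y.2); rewrite !expr2; nra.
Qed.

Lemma abs_coord_le_norm3 y :
  [/\ `|y.1.1| <= norm3 y, `|y.1.2| <= norm3 y & `|y.2| <= norm3 y].
Proof.
have le_sqrt a s : a ^+ 2 <= s -> `|a| <= Num.sqrt s.
  by move=> ?; rewrite -sqrtr_sqr; exact: ler_wsqrtr.
have := sqr_ge0 y.1.1; have := sqr_ge0 y.1.2; have := sqr_ge0 y.2.
by split; apply: le_sqrt; lra.
Qed.

Definition cube c r : set mR3 :=
  `[c.1.1 - r, c.1.1 + r] `*` `[c.1.2 - r, c.1.2 + r] `*` `[c.2 - r, c.2 + r].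

Lemma cubeP c r y : cube c r y <->
  [/\ `|c.1.1 - y.1.1| <= r, `|c.1.2 - y.1.2| <= r & `|c.2 - y.2| <= r].
Proof.
rewrite /cube /= !in_itv /= ![`|c.1.1 - _|]distrC ![`|c.1.2 - _|]distrC.
rewrite ![`|c.2 - _|]distrC !ler_distl.
by split=> [[[-> ->] ->]|[-> -> ->]].
Qed.

Lemma measurable_cube c r : measurable (cube c r).
Proof. by apply: measurableX; [apply: measurableX|]; exact: measurable_itv. Qed.

Lemma leb3X (A B C : set (measurableTypeR R)) :
  measurable A -> measurable B -> measurable C ->
  leb3 R (A `*` B `*` C) =
  (lebesgue_measure A * lebesgue_measure B * lebesgue_measure C)%E.
Proof.
move=> mA mB mC; rewrite /leb3 product_measure1E //; last exact: measurableX.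
by rewrite [X in (X * _)%E]product_measure1E.
Qed.

Lemma leb3_cube c r : 0 <= r -> leb3 R (cube c r) = ((2 * r) ^+ 3)%:E.
Proof.
move=> r0; rewrite leb3X; [|exact: measurable_itv..].
rewrite !lebesgue_measure_itv /= !lte_fin.
have [->|r_neq0] := eqVneq r 0; first by rewrite !subr0 !addr0 ltxx !mul0e mulr0 expr0n.
have lt_r a : a - r < a + r by rewrite ltrBlDr -addrA ltrDl; lra.
by rewrite !lt_r -!EFinD -!EFinM; congr EFin; ring.
Qed.

Lemma mem_cube_norm3 c r y : norm3 (sub3 c y) <= r -> cube c r y.
Proof.
case: (abs_coord_le_norm3 (sub3 c y)) => /= h1 h2 h3 le_r.
by apply/cubeP; split; [exact: le_trans h1 le_r|exact: le_trans h2 le_r|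
  exact: le_trans h3 le_r].
Qed.

Lemma sqr_norm3_cube c r y : cube c r y -> norm3 (sub3 c y) ^+ 2 <= 3 * r ^+ 2.
Proof. by rewrite sqr_norm3 /= => /cubeP[]; rewrite !ler_norml; nra. Qed.

Let far_weight_ge0 r n : 0 <= r -> 0 <= (2 / (r * 2 ^+ n)) ^+ 4.
Proof. by move=> r_ge0; rewrite exprn_ge0 // divr_ge0 // mulr_ge0 // exprn_ge0. Qed.

Let near_weight_ge0 r n : 0 <= r -> 0 <= 2 ^+ n.+1 / r.
Proof. by move=> r_ge0; rewrite divr_ge0 // exprn_ge0. Qed.

Definition far_dyadic c r :=
  indic_series (fun n => (2 / (r * 2 ^+ n)) ^+ 4) (fun n => cube c (r * 2 ^+ n)).

Definition near_dyadic c r :=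
  indic_series (fun n => 2 ^+ n.+1 / r) (fun n => cube c (r / 2 ^+ n)).

Lemma inv_norm3X4_le_far_dyadic c r y : 0 < r -> r <= norm3 (sub3 c y) ->
  ((((norm3 (sub3 c y)) ^+ 4)^-1)%:E <= far_dyadic c r y)%E.
Proof.
set u := norm3 (sub3 c y) => r_gt0 ru; have u_gt0 : 0 < u := lt_le_trans r_gt0 ru.
have [n unr] := exists_expr2_gt (u / r).
have ex_cube : exists n, y \in cube c (r * 2 ^+ n).
  exists n; rewrite in_setE; apply: mem_cube_norm3.
  by rewrite mulrC -ler_pdivrMr // ltW.
case: (ex_minnP ex_cube) => {n unr} n /[!in_setE] ycube minn.
have half_le_u : r * 2 ^+ n / 2 <= u.
  case: n minn ycube => [|m] minn _; first by rewrite expr0 mulr1; lra.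
  have /negP/[!in_setE] ycube_m : y \notin cube c (r * 2 ^+ m).
    by apply/negP => /minn; rewrite ltnn.
  have -> : r * 2 ^+ m.+1 / 2 = r * 2 ^+ m by rewrite exprS; field.
  by rewrite leNgt; apply/negP => /ltW /mem_cube_norm3.
have weights_ge0 k : 0 <= (2 / (r * 2 ^+ k)) ^+ 4 by apply: far_weight_ge0; exact: ltW.
apply: le_trans
  (le_indic_series _ (fun k => cube c (r * 2 ^+ k)) weights_ge0 n y ycube).
rewrite lee_fin -invf_div exprVn lef_pV2 ?posrE ?exprn_gt0 ?divr_gt0 ?mulr_gt0 //.
rewrite lerXn2r ?nnegrE //; last exact: ltW u_gt0.
by rewrite divr_ge0 // mulr_ge0 // ltW.
Qed.

Lemma inv_norm3_le_near_dyadic c r y : 0 < norm3 (sub3 c y) <= r ->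
  (((norm3 (sub3 c y))^-1)%:E <= near_dyadic c r y)%E.
Proof.
set w := norm3 (sub3 c y) => /andP[w_gt0 wr].
have r_gt0 : 0 < r := lt_le_trans w_gt0 wr.
have [n rnw] := exists_expr2_gt (2 * r / w).
have ex_out : exists n, y \notin cube c (r / 2 ^+ n).
  exists n; apply/negP; rewrite in_setE => /sqr_norm3_cube; rewrite -/w.
  have pn : 0 < (2 : R) ^+ n by rewrite exprn_gt0.
  have : r / 2 ^+ n < w / 2.
    by move: rnw; rewrite !ltr_pdivrMr //; nra.
  have : 0 <= r / 2 ^+ n by rewrite divr_ge0 // ltW.
  move: (r / 2 ^+ n) => s; nra.
case: (ex_minnP ex_out) => {n rnw} -[|m] /negP/[!in_setE] yout minm.
  by rewrite expr0 divr1 in yout; case: (yout (mem_cube_norm3 _ _ _ wr)).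
have ycube : cube c (r / 2 ^+ m) y.
  apply: contrapT => ym; suff : (m < m)%N by rewrite ltnn.
  by apply: minm; apply/negP; rewrite in_setE.
have rw : r / 2 ^+ m.+1 < w.
  by rewrite ltNge; apply/negP => /(mem_cube_norm3 _ _ _).
have weights_ge0 k : 0 <= 2 ^+ k.+1 / r by apply: near_weight_ge0; exact: ltW.
apply: le_trans
  (le_indic_series _ (fun k => cube c (r / 2 ^+ k)) weights_ge0 m y ycube).
rewrite lee_fin -invf_div lef_pV2 ?posrE ?divr_gt0 ?exprn_gt0 //; exact: ltW.
Qed.

Lemma integral_far_dyadic c r : 0 < r ->
  (\int[leb3 R]_y far_dyadic c r y <= (256 / r)%:E)%E.
Proof.
move=> r_gt0; have p_gt0 n : 0 < (2 : R) ^+ n by rewrite exprn_gt0.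
rewrite integral_indic_series; last 2 first.
- by move=> n; apply: far_weight_ge0; exact: ltW.
- by move=> n; exact: measurable_cube.
have term n : (((2 / (r * 2 ^+ n)) ^+ 4)%:E * leb3 R (cube c (r * 2 ^+ n)) =
              (128 / r * 2^-1 ^+ n)%:E)%E.
  rewrite leb3_cube ?mulr_ge0 ?ltW // -EFinM exprVn; congr EFin.
  by field; rewrite gt_eqF // gt_eqF.
rewrite (eq_eseriesr (fun n _ => term n)).
have -> : 256 / r = 128 / r / (1 - 2^-1) by field; rewrite gt_eqF.
by apply: nneseries_geometric_le; [rewrite divr_ge0 // ltW|lra].
Qed.

Lemma integral_near_dyadic c r : 0 < r ->
  (\int[leb3 R]_y near_dyadic c r y <= (64 * r ^+ 2 / 3)%:E)%E.
Proof.
move=> r_gt0; have p_gt0 n : 0 < (2 : R) ^+ n by rewrite exprn_gt0.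
rewrite integral_indic_series; last 2 first.
- by move=> n; apply: near_weight_ge0; exact: ltW.
- by move=> n; exact: measurable_cube.
have term n : ((2 ^+ n.+1 / r)%:E * leb3 R (cube c (r / 2 ^+ n)) =
              (16 * r ^+ 2 * 4^-1 ^+ n)%:E)%E.
  rewrite leb3_cube ?divr_ge0 ?ltW // -EFinM exprVn; congr EFin.
  have -> : (4 : R) ^+ n = 2 ^+ n * 2 ^+ n by rewrite -exprMn -natrM.
  by rewrite exprS; field; rewrite gt_eqF // gt_eqF.
rewrite (eq_eseriesr (fun n _ => term n)).
have -> : 64 * r ^+ 2 / 3 = 16 * r ^+ 2 / (1 - 4^-1) by field.
by apply: nneseries_geometric_le; [rewrite mulr_ge0 // sqr_ge0|lra].
Qed.

Definition dyadic_majorant x y : \bar R :=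
  ((2 / norm3 x)%:E * far_dyadic ((0, 0), 0)%R 2^-1 y +
   (16 / norm3 x ^+ 4)%:E * near_dyadic x (3 * norm3 x) y)%E.

Lemma dyadic_majorant_ge0 x y : 0 < norm3 x -> (0 <= dyadic_majorant x y)%E.
Proof.
move=> /ltW X_ge0; apply: adde_ge0; apply: mule_ge0;
  rewrite ?lee_fin ?divr_ge0 ?exprn_ge0 //; apply: indic_series_ge0 => n.
- by apply: far_weight_ge0; rewrite invr_ge0.
- by apply: near_weight_ge0; rewrite mulr_ge0.
Qed.

Lemma inv_norm3_mul_le_dyadic_majorant x y :
  0 < norm3 x -> 2^-1 <= norm3 y -> norm3 (sub3 x y) <= 3 * norm3 x ->
  (((norm3 (sub3 x y) * norm3 y ^+ 4)^-1)%:E <= dyadic_majorant x y)%E.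
Proof.
set X := norm3 x; set w := norm3 (sub3 x y); set u := norm3 y => X_gt0 u_ge wX.
have [w0|w_neq0] := eqVneq w 0.
  by rewrite w0 mul0r invr0 dyadic_majorant_ge0.
have w_gt0 : 0 < w by rewrite lt_neqAle eq_sym w_neq0 norm3_ge0.
have u_gt0 : 0 < u by apply: lt_le_trans u_ge; rewrite invr_gt0.
apply: le_trans (_ : _ <= ((2 / X) * (u ^+ 4)^-1 + 16 / X ^+ 4 * w^-1)%:E)%E _.
  by rewrite lee_fin inv_mul_le_far_near // sqr_norm3_le.
rewrite /dyadic_majorant EFinD !EFinM.
have X_ge0 := ltW X_gt0.
apply: leeD; apply: lee_wpmul2l; rewrite ?lee_fin ?divr_ge0 ?exprn_ge0 //.
- rewrite -[u]norm3_sub0; apply: inv_norm3X4_le_far_dyadic.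
    by rewrite invr_gt0.
  by rewrite norm3_sub0.
- by apply: inv_norm3_le_near_dyadic; rewrite w_gt0.
Qed.

Lemma integral_dyadic_majorant x : 1 <= norm3 x ->
  (\int[leb3 R]_y dyadic_majorant x y <= (4096 / norm3 x)%:E)%E.
Proof.
set X := norm3 x => X_ge1; have X_gt0 : 0 < X by lra.
have far_ge0 : 0 <= 2 / X by rewrite divr_ge0 // ltW.
have near_ge0 : 0 <= 16 / X ^+ 4 by rewrite divr_ge0 // exprn_ge0 // ltW.
have far_weights_ge0 n : 0 <= (2 / (2^-1 * 2 ^+ n)) ^+ 4 :> R.
  by apply: far_weight_ge0; rewrite invr_ge0.
have near_weights_ge0 n : 0 <= 2 ^+ n.+1 / (3 * X).
  by apply: near_weight_ge0; rewrite mulr_ge0 // ltW.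
pose F := far_dyadic ((0, 0), 0) 2^-1; pose G := near_dyadic x (3 * X).
have F_ge0 y : (0 <= F y)%E := indic_series_ge0 _ _ far_weights_ge0 y.
have G_ge0 y : (0 <= G y)%E := indic_series_ge0 _ _ near_weights_ge0 y.
have mF : measurable_fun setT F.
  exact: measurable_indic_series far_weights_ge0 (fun n => measurable_cube _ _).
have mG : measurable_fun setT G.
  exact: measurable_indic_series near_weights_ge0 (fun n => measurable_cube _ _).
rewrite /dyadic_majorant -/F -/G ge0_integralD //; last 4 first.
- by move=> y _; rewrite mule_ge0.
- exact: measurable_funeM.
- by move=> y _; rewrite mule_ge0.
- exact: measurable_funeM.
rewrite !ge0_integralZl //.
have half_gt0 : 0 < 2^-1 :> R by rewrite invr_gt0.
have X3_gt0 : 0 < 3 * X by rewrite mulr_gt0.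
apply: le_trans (leeD (lee_wpmul2l _ (integral_far_dyadic ((0, 0), 0) _ half_gt0))
                      (lee_wpmul2l _ (integral_near_dyadic x _ X3_gt0))) _;
  rewrite ?lee_fin //.
have -> : 2 / X * (256 / 2^-1) + 16 / X ^+ 4 * (64 * (3 * X) ^+ 2 / 3) =
          (1024 + 3072 / X) / X by field; rewrite gt_eqF.
have : 3072 / X <= 3072 by rewrite ler_pdivrMr //; lra.
by rewrite ler_pM2r ?invr_gt0 //; lra.
Qed.

End dyadic_cubes.

Theorem lemmaE11 (R : realType) :
  exists C : R, 0 < C /\
  forall (T S t : R) (x : R * R * R),
    2 <= T -> Num.max (2 * T) 6 <= S ->
    `| t - norm3 x | <= 1 ->
    Num.max 12 (Num.max T (2 * S)) <= norm3 x ->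
    (\int[leb3 R]_(y in [set y : R * R * R | (norm3 (sub3 x y) <= t + T)%R])
        (((norm3 (sub3 x y) * norm3 y ^+ 4)^-1
          * (if 2^-1 * (1 + `| t - norm3 (sub3 x y) |) <= norm3 y then 1 else 0))%R%:E)
     <= (C * (1 + T) / norm3 x)%R%:E)%E.
Proof.
exists 4096; split=> [|T S t x T_ge2 _ /[!ler_distl] /andP[t_lb t_ub]].
  by rewrite ltr0n.
rewrite !ge_max => /and3P[X_ge12 TX _].
have X_ge1 : 1 <= norm3 x by lra.
rewrite integral_mkcond.
apply: (@le_trans _ _ (\int[leb3 R]_y dyadic_majorant x y)%E); last first.
  apply: le_trans (integral_dyadic_majorant x X_ge1) _.
  by rewrite lee_fin ler_pM2r ?invr_gt0; lra.
apply: ge0_le_integralT => y; rewrite patchE.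
- case: ifP => _ //.
  by rewrite lee_fin mulr_ge0 ?invr_ge0 ?mulr_ge0 ?exprn_ge0 ?norm3_ge0 //; case: ifP.
- case: ifPn => [/[!inE] /= wT|_]; last by apply: dyadic_majorant_ge0; lra.
  case: ifPn => [u_ge|_]; last by rewrite mulr0 dyadic_majorant_ge0 //; lra.
  rewrite mulr1; apply: inv_norm3_mul_le_dyadic_majorant; try lra.
  by have := normr_ge0 (t - norm3 (sub3 x y)); lra.
Qed.
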